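(* Let $M\ge1$, $N\ge0$, let $\{m\}=(m_0,\dots,m_{M-1})$ with $\sum m_k=N+1$ and $\{n\}=(n_0,\dots,n_{M-1})$ with $\sum n_k=N$ be tuples of nonnegative integers with associated partitions $\mu$ ($N+1$ parts) and $\lambda$ ($N$ parts). For nonzero $v\in\mathbb{C}$ with $v^{-2}\neq\beta$, put $z=(v^{-2}-\beta)^{-1}$. Then $$\langle\{m\}|(v^{-1}-\beta v)^{1-M}\mathcal{B}(v)|\{n\}\rangle=G_{\mu/\lambda}(z;\beta),\qquad \langle\{n\}|(v^{-1}-\beta v)^{1-M}\mathcal{C}(v)|\{m\}\rangle=G_{\mu^\vee/\lambda^\vee}(z;\beta),$$ where $\lambda^\vee_j=M-1-\lambda_{N+1-j}$ ($1\le j\le N$) and $\mu^\vee_j=M-1-\mu_{N+2-j}$ ($1\le j\le N+1$).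
   Context: Non-Hermitian phase model: $\beta\in\mathbb{C}$ is a parameter. $\mathcal{F}$ is the bosonic Fock space with orthonormal basis $|n\rangle$, $n=0,1,2,\dots$; $\phi|n\rangle=|n-1\rangle$ ($\phi|0\rangle=0$), $\phi^\dagger|n\rangle=|n+1\rangle$, $\pi|n\rangle=\delta_{n,0}|n\rangle$. Sites are labelled $0,\dots,M-1$ with Fock spaces $\mathcal{F}_0,\dots,\mathcal{F}_{M-1}$; $\phi_j,\phi_j^\dagger,\pi_j$ act on $\mathcal{F}_j$. With $W_a=\mathbb{C}^2$, basis $|0\rangle_a,|1\rangle_a$, the $L$-operator on $W_a\otimes\mathcal{F}_j$ is $$\mathcal{L}_{aj}(v)=|0\rangle\langle0|_a\otimes(v^{-1}-\beta v\pi_j)+|0\rangle\langle1|_a\otimes\phi_j^\dagger+|1\rangle\langle0|_a\otimes\phi_j+|1\rangle\langle1|_a\otimes v,$$ i.e. the $2\times2$ matrix $\begin{pmatrix}v^{-1}-\beta v\pi_j&\phi_j^\dagger\\ \phi_j&v\end{pmatrix}$. The monodromy matrix is $\mathcal{T}_a(v)=\mathcal{L}_{a,M-1}(v)\cdots\mathcal{L}_{a,0}(v)=\begin{pmatrix}\mathcal{A}(v)&\mathcal{B}(v)\\ \mathcal{C}(v)&\mathcal{D}(v)\end{pmatrix}$, so $\mathcal{B}(v)={}_a\langle0|\mathcal{T}_a(v)|1\rangle_a$, $\mathcal{C}(v)={}_a\langle1|\mathcal{T}_a(v)|0\rangle_a$. For $\{n\}=(n_0,\dots,n_{M-1})$,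 $|\{n\}\rangle=\otimes_{j=0}^{M-1}|n_j\rangle_j$ and $\langle\{n\}|$ its dual. The partition associated with $\{n\}$ (with $\sum n_k=N$) is the weakly decreasing length-$N$ sequence $\lambda=((M-1)^{n_{M-1}},\dots,1^{n_1},0^{n_0})$. For $\mu$ with $N+1$ entries and $\lambda$ with $N$ entries, $|\lambda|=\sum\lambda_j$ and $G_{\mu/\lambda}(z;\beta)=z^{|\mu|-|\lambda|}\prod_{j=1}^N(1+\beta z-\beta z\,\delta_{\mu_{j+1},\lambda_j})$ if $\mu_j\ge\lambda_j\ge\mu_{j+1}$ for all $1\le j\le N$, and $0$ otherwise. *)

(* The parameter field C stands for the complex numbers
   (any numClosedFieldType, e.g. algC). *)
From HB Require Import structures.
From mathcomp Require Import all_boot all_order all_algebra.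
Set Implicit Arguments. Unset Strict Implicit. Unset Printing Implicit Defensive.
Import Order.TTheory GRing.Theory Num.Theory.
Local Open Scope ring_scope.

(* Matrix element  <k| L_{ab}(v) |l>  of the L-operator on one site, as a
   2x2 matrix in the auxiliary index (a,b) in {0,1}:
     L_00 = v^{-1} - beta v pi,  L_01 = phi^dag,  L_10 = phi,  L_11 = v. *)
Definition Lmat (C : fieldType) (beta v : C) (k l : nat) : 'M[C]_2 :=
  \matrix_(a < 2, b < 2)
    match val a, val b with
    | 0%N, 0%N => (v^-1 - beta * v * (l == 0%N)%:R) * (k == l)%:R
    | 0%N, _ => (k == l.+1)%:R               (* phi^dag |l> = |l+1> *)
    | _, 0%N => (k.+1 == l)%:R               (* phi |l> = |l-1>, phi|0> = 0 *)
    | _, _ => v * (k == l)%:R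
    end.

(* <{k}| T_a(v) |{l}> as a 2x2 matrix in the auxiliary space, where
   T_a(v) = L_{a,M-1}(v) ... L_{a,0}(v); since L_{aj} acts on site j only,
   the Fock matrix element factorises site by site. *)
Definition monodromy (C : fieldType) (M : nat) (beta v : C)
  (k l : 'I_M -> nat) : 'M[C]_2 :=
  \prod_(i < M) Lmat beta v (k (rev_ord i)) (l (rev_ord i)).

(* <{m}| B(v) |{n}> = <0|_a T |1>_a  and  <{n}| C(v) |{m}> = <1|_a T |0>_a *)
Definition Bel (C : fieldType) (M : nat) (beta v : C) (m n : 'I_M -> nat) : C :=
  monodromy beta v m n 0 1.
Definition Cel (C : fieldType) (M : nat) (beta v : C) (n m : 'I_M -> nat) : C :=
  monodromy beta v n m 1 0.

Definition partition_of (M : nat) (n : 'I_M -> nat) : seq nat :=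
  flatten [seq nseq (n i) (val i) | i <- rev (enum 'I_M)].

Definition dual_part (M : nat) (s : seq nat) : seq nat :=
  [seq (M - 1 - x)%N | x <- rev s].

(* G_{mu/lambda}(z;beta), with 0-based indices: mu_j = nth 0 mu j, j < N = size la. *)
Definition G_skew (C : fieldType) (mu la : seq nat) (z beta : C) : C :=
  if [forall j : 'I_(size la),
        (nth 0 mu j >= nth 0 la j)%N && (nth 0 la j >= nth 0 mu j.+1)%N]
  then z ^+ (sumn mu - sumn la) *
       \prod_(j < size la)
          (1 + beta * z - beta * z * (nth 0 mu j.+1 == nth 0 la j)%:R)
  else 0.

From HB Require Import structures.
From mathcomp Require Import all_boot all_order all_algebra.
From mathcomp Require Import zify ring.
Set Implicit Arguments. Unset Strict Implicit. Unset Printing Implicit Defensive.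
Import Order.TTheory GRing.Theory Num.Theory.
Local Open Scope ring_scope.

(* Peel off the last site: T_(M+1) = L_M T_M, so the second column of the
   monodromy, whose entries are B(v) and D(v), obeys a two-term recursion.
   Up to powers of c = v^-1 - beta v, B is the skew weight of mu/la and D that
   of (M :: mu)/la.  Splitting off the top block of parts equal to M (p of them
   in mu, q in la), interlacing leaves only p = q (a B-term, weight 1 or
   1 + beta z) and p = q + 1 (a D-term), and the L-entries v^-1 - beta v [q = 0],
   1, 1, v supply exactly these factors since v = c z and v^-1 = c (1 + beta z).
   The C-statement is the B-statement for the transposed monodromy, which
   reverses the sites and hence dualises the partitions. *)

Section SkewWeight.
Variables (C : fieldType) (beta z : C).

Fixpoint skew_weight (mu la : seq nat) : C :=
  if la is y :: la' then
    ((y <= nth 0 mu 0)%N && (nth 0 mu 1 <= y)%N)%:R *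
    (1 + beta * z - beta * z * (nth 0 mu 1 == y)%:R) * skew_weight (behead mu) la'
  else 1.

Lemma forall_ordS n (P : 'I_n.+1 -> bool) :
  [forall j, P j] = P ord0 && [forall j : 'I_n, P (lift ord0 j)].
Proof.
apply/forallP/andP => [P_all | [P0 /forallP P_lift] j].
  by split; [exact: P_all | apply/forallP => j; exact: P_all].
by case: (unliftP ord0 j) => [j'|] ->.
Qed.

Lemma skew_weightE mu la : skew_weight mu la =
  if [forall j : 'I_(size la),
        (nth 0 mu j >= nth 0 la j)%N && (nth 0 la j >= nth 0 mu j.+1)%N]
  then \prod_(j < size la)
          (1 + beta * z - beta * z * (nth 0 mu j.+1 == nth 0 la j)%:R)
  else 0.
Proof.
elim: la mu => [|y la IH] mu /=.
  by rewrite big_ord0; case: ifP => // /negbT/forallPn[[]].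
rewrite forall_ordS big_ord_recl /=.
have bump0 j : bump 0 j = j.+1 by rewrite /bump add1n.
under eq_forallb => j do
  rewrite bump0 add0n -[nth 0 mu j.+1]nth_behead -[nth 0 mu j.+2]nth_behead.
under eq_bigr => j _ do rewrite bump0 add0n -[nth 0 mu j.+2]nth_behead.
rewrite IH; case: (_ && _); last by rewrite !mul0r.
by case: ifP; rewrite ?mul1r ?mulr0.
Qed.

Lemma skew_weight_sumn mu la : skew_weight mu la != 0 -> (sumn la <= sumn mu)%N.
Proof.
elim: la mu => [|y la IH] mu //=.
case: andP => [[y_le _]|]; last by rewrite !mul0r eqxx.
rewrite mul1r mulf_eq0 negb_or => /andP[_ /IH].
by case: mu y_le => [|x mu] /=; lia.
Qed.

Lemma G_skew_weight mu la : z != 0 ->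
  G_skew mu la z beta = z ^+ sumn mu / z ^+ sumn la * skew_weight mu la.
Proof.
move=> z_neq0; have -> : G_skew mu la z beta = z ^+ (sumn mu - sumn la) * skew_weight mu la.
  by rewrite /G_skew skew_weightE; case: ifP; rewrite ?mulr0.
have [->|w_neq0] := eqVneq (skew_weight mu la) 0; first by rewrite !mulr0.
by rewrite -expfB_cond // (negbTE z_neq0) add0n skew_weight_sumn.
Qed.

Lemma skew_weight_head x x' mu la : (nth 0 la 0 <= x)%N -> (nth 0 la 0 <= x')%N ->
  skew_weight (x :: mu) la = skew_weight (x' :: mu) la.
Proof. by case: la => [|y la] //= -> ->. Qed.

Lemma skew_weight_nseq t p q mu la :
  all (fun x => x < t)%N mu -> all (fun y => y < t)%N la ->
  (p + size mu = (q + size la).+1)%N ->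
  skew_weight (nseq p t ++ mu) (nseq q t ++ la) =
    if p == q.+1 then skew_weight (t :: mu) la
    else if p == q then (if p is 0 then 1 else 1 + beta * z) * skew_weight mu la
    else 0.
Proof.
move=> mu_lt la_lt; elim: q p => [|q IH] [|[|p]] //= size_eq.
- by rewrite mul1r.
- case: la la_lt size_eq => [|y la] //= /andP[y_lt _] _.
  by rewrite [(t <= y)%N]leqNgt y_lt andbF !mul0r.
- case: mu {IH} mu_lt size_eq => [|x mu] //= /andP[x_lt _] _.
  by rewrite [(t <= x)%N]leqNgt x_lt !mul0r.
- rewrite leqnn (IH 0%N) /=; last by lia.
  case: mu {IH} mu_lt size_eq => [|x mu] //= /andP[x_lt _] _.
  rewrite (ltnW x_lt) (ltn_eqF x_lt) mulr0 subr0 mul1r.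
  by case: q => [|q]; rewrite ?mulr0 ?mul1r.
- by rewrite leqnn eqxx mulr1 addrK !mul1r; apply: (IH p.+1); lia.
Qed.

(* z^|mu| / z^|la| rather than z^(|mu| - |la|), to avoid truncated subtraction. *)
Definition skew_term (mu la : seq nat) : C :=
  if size mu == (size la).+1 then z ^+ sumn mu / z ^+ sumn la * skew_weight mu la
  else 0.

Lemma skew_term_head t mu la : (nth 0 la 0 <= t)%N ->
  skew_term (t.+1 :: mu) la = z * skew_term (t :: mu) la.
Proof.
move=> la_le; rewrite /skew_term /=; case: ifP; last by rewrite mulr0.
by rewrite (@skew_weight_head t.+1 t) ?(leqW la_le) // exprS !mulrA.
Qed.

Lemma skew_term_nseq t p q mu la : z != 0 ->
  all (fun x => x < t)%N mu -> all (fun y => y < t)%N la ->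
  skew_term (nseq p t ++ mu) (nseq q t ++ la) =
    if p == q.+1 then skew_term (t :: mu) la
    else if p == q then (if p is 0 then 1 else 1 + beta * z) * skew_term mu la
    else 0.
Proof.
move=> z_neq0 mu_lt la_lt.
have zpow_cancel a b : z ^+ (t * q + a) / z ^+ (t * q + b) = z ^+ a / z ^+ b.
  by rewrite !exprD invfM mulrACA divff ?mul1r // expf_neq0.
rewrite /skew_term !size_cat !size_nseq !sumn_cat !sumn_nseq.
case: eqP => [size_eq | size_neq].
  rewrite skew_weight_nseq //.
  case: eqP => [p_eq | _].
    rewrite p_eq mulnSr -addnA zpow_cancel /= ifT //; apply/eqP; lia.
  case: eqP => [p_eq | _]; last by rewrite mulr0.
  by rewrite p_eq zpow_cancel mulrCA ifT //; apply/eqP; lia.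
case: eqP => [p_eq | _]; first by rewrite ifF //=; apply/eqP; lia.
case: eqP => [p_eq | _] //.
by rewrite ifF ?mulr0 //; apply/eqP; lia.
Qed.

End SkewWeight.

Lemma partition_ofS M (k : 'I_M.+1 -> nat) : partition_of k =
  nseq (k ord_max) M ++ partition_of (fun j => k (widen_ord (leqnSn M) j)).
Proof.
rewrite /partition_of enum_ordSr rev_rcons /=; congr (_ ++ _).
by rewrite -[rev (map _ _)]map_rev -map_comp.
Qed.

Lemma partition_of_lift0 M (k : 'I_M.+1 -> nat) : partition_of k =
  map S (partition_of (fun i => k (lift ord0 i))) ++ nseq (k ord0) 0%N.
Proof.
rewrite /partition_of enum_ordSl rev_cons -cats1 map_cat flatten_cat /= cats0.
congr (_ ++ _); rewrite map_flatten -[rev (map _ _)]map_rev -!map_comp.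
by congr flatten; apply: eq_map => i /=; rewrite map_nseq /bump add1n.
Qed.

Lemma eq_partition_of M (k1 k2 : 'I_M -> nat) : k1 =1 k2 ->
  partition_of k1 = partition_of k2.
Proof. by move=> eq_k; congr flatten; apply: eq_map => i; rewrite eq_k. Qed.

Lemma partition_of0 (k : 'I_0 -> nat) : partition_of k = [::].
Proof. by rewrite /partition_of enum_ord0. Qed.

Lemma size_partition_of M (k : 'I_M -> nat) : size (partition_of k) = (\sum_i k i)%N.
Proof.
elim: M k => [|M IH] k; first by rewrite partition_of0 big_ord0.
by rewrite partition_ofS size_cat size_nseq IH big_ord_recr /= addnC.
Qed.

Lemma partition_of_lt M (k : 'I_M -> nat) : all (fun x => x < M)%N (partition_of k).
Proof.
elim: M k => [|M IH] k; first by rewrite partition_of0.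
rewrite partition_ofS all_cat all_nseq leqnn orbT /=.
by apply: sub_all (IH _) => x /ltnW.
Qed.

Lemma dual_part_partition_of M (k : 'I_M -> nat) :
  dual_part M (partition_of k) = partition_of (fun i => k (rev_ord i)).
Proof.
elim: M k => [|M IH] k; first by rewrite !partition_of0.
rewrite partition_ofS partition_of_lift0 /dual_part rev_cat map_cat rev_nseq map_nseq.
congr (_ ++ _); last by rewrite subn1 subnn; congr (nseq (k _) _); apply/val_inj => /=; lia.
set k' := fun j => k (widen_ord (leqnSn M) j).
have -> : partition_of (fun i : 'I_M => k (rev_ord (lift ord0 i))) =
          partition_of (fun i => k' (rev_ord i)).
  apply: eq_partition_of => i; rewrite /k'; congr k; apply/val_inj => /=.
  by rewrite /bump /=; have := ltn_ord i; lia.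
rewrite -IH /dual_part -map_comp; apply/eq_in_map => x.
by rewrite mem_rev => /(allP (partition_of_lt k')) /=; lia.
Qed.

Section MonodromyAlgebra.
Variables (C : fieldType) (beta v : C).

Lemma mulmx2E (A B : 'M[C]_2) i j :
  (A * B) i j = A i ord0 * B ord0 j + A i ord_max * B ord_max j.
Proof.
rewrite -mulmxE mxE big_ord_recr big_ord_recl big_ord0 /= addr0.
by have -> : widen_ord (leqnSn 1) ord0 = ord0 :> 'I_2 by apply/val_inj.
Qed.

Lemma monodromyS M (k l : 'I_M.+1 -> nat) :
  monodromy beta v k l = Lmat beta v (k ord_max) (l ord_max) *
    monodromy beta v (fun j => k (widen_ord (leqnSn M) j))
                     (fun j => l (widen_ord (leqnSn M) j)).
Proof.
rewrite /monodromy big_ord_recl.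
have -> : rev_ord (ord0 : 'I_M.+1) = ord_max by apply/val_inj => /=; lia.
congr (_ * _); apply: eq_bigr => i _.
have -> // : rev_ord (lift ord0 i) = widen_ord (leqnSn M) (rev_ord i).
by apply/val_inj => /=; rewrite /bump /=; lia.
Qed.

Lemma tr_Lmat k l : (Lmat beta v k l)^T = Lmat beta v l k.
Proof.
apply/matrixP => i j; rewrite !mxE.
case: i => [[|[|i]] ?] //; case: j => [[|[|j]] ?] //=; try by rewrite eq_sym.
by have [->|] := eqVneq k l; rewrite ?mulr0.
Qed.

Lemma trmx_prod_ord M (A : 'I_M -> 'M[C]_2) :
  (\prod_(i < M) A i)^T = \prod_(i < M) (A (rev_ord i))^T.
Proof.
elim: M A => [|M IH] A; first by rewrite !big_ord0 trmx1.
rewrite big_ord_recl -mulmxE trmx_mul mulmxE IH big_ord_recr /=.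
congr (_ * _); last by congr (A _)^T; apply/val_inj => /=; lia.
apply: eq_bigr => i _; congr (A _)^T; apply/val_inj => /=.
by rewrite /bump /=; have := ltn_ord i; lia.
Qed.

Lemma Cel_Bel M (n m : 'I_M -> nat) :
  Cel beta v n m = Bel beta v (fun i => m (rev_ord i)) (fun i => n (rev_ord i)).
Proof.
rewrite /Cel /Bel.
have -> : monodromy beta v n m 1 0 = (monodromy beta v n m)^T 0 1 by rewrite mxE.
rewrite /monodromy trmx_prod_ord.
by under eq_bigr => i _ do rewrite tr_Lmat.
Qed.

End MonodromyAlgebra.

Section MonodromyEntries.
Variables (C : fieldType) (beta v : C).
Hypotheses (v_neq0 : v != 0) (v2_neq_beta : v ^- 2 != beta).

Local Notation c := (v^-1 - beta * v).
Local Notation z := ((v ^- 2 - beta)^-1).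

Lemma z_neq0 : z != 0.
Proof. by rewrite invr_eq0 subr_eq0. Qed.

Lemma one_sub_beta_v2_neq0 : 1 - beta * v ^+ 2 != 0.
Proof.
have -> : 1 - beta * v ^+ 2 = (v ^- 2 - beta) * v ^+ 2.
  by rewrite mulrBl mulVf ?expf_neq0.
by rewrite mulf_neq0 ?expf_neq0 // subr_eq0.
Qed.

Lemma v_factor : v = c * z.
Proof. by field; rewrite v_neq0 mulNr one_sub_beta_v2_neq0. Qed.

Lemma vinv_factor : v^-1 = c * (1 + beta * z).
Proof. by field; rewrite v_neq0 mulNr one_sub_beta_v2_neq0. Qed.

Lemma c_neq0 : c != 0.
Proof. by apply/eqP => c0; move: v_neq0; rewrite {1}v_factor c0 mul0r eqxx. Qed.

Lemma mul_v_vinv_factors : c * z * (c * (1 + beta * z)) = 1.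
Proof. by rewrite -v_factor -vinv_factor divff. Qed.

Lemma monodromy_col1 M (k l : 'I_M -> nat) :
  c * monodromy beta v k l ord0 ord_max =
    c ^+ M * skew_term beta z (partition_of k) (partition_of l) /\
  c * monodromy beta v k l ord_max ord_max =
    c ^+ M.+1 * skew_term beta z (M :: partition_of k) (partition_of l).
Proof.
elim: M k l => [|M IH] k l.
  rewrite /monodromy big_ord0 !partition_of0 /skew_term !mxE /=.
  by split; [rewrite !mulr0 | rewrite expr1 addn0 expr0 divr1 !mulr1].
have la_head : (nth 0 (partition_of l) 0 <= M)%N.
  by case: (partition_of l) (partition_of_lt l) => //= y s /andP[].
rewrite (monodromyS beta v k l) !mulmx2E !partition_ofS in la_head *.
set p := k ord_max; set q := l ord_max.
set k' := fun j => k _; set l' := fun j => l _.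
have [IH0 IH1] := IH k' l'.
have mu_lt := partition_of_lt k'; have la_lt := partition_of_lt l'.
set mu := partition_of k' in IH0 IH1 mu_lt *; set la := partition_of l' in IH0 IH1 la_lt *.
rewrite !mxE /= !mulrDr !(mulrCA c) IH0 IH1 skew_term_head //.
rewrite (skew_term_nseq _ p.+1) ?skew_term_nseq ?z_neq0 //; split.
- have [-> | _] := eqVneq p q.+1.
    by rewrite (gtn_eqF (ltnSn q)) /=; ring.
  have [-> | _] := eqVneq p q; last by rewrite /= !mulr0 !mul0r addr0.
  case: q => [|q] /=; first by rewrite [c ^+ M.+1]exprS; ring.
  by rewrite mulr0 subr0 {1}vinv_factor [c ^+ M.+1]exprS; ring.
- rewrite eqSS; have [-> | _] := eqVneq p q.
    rewrite (gtn_eqF (ltnSn q)) /= [in v * _]v_factor [c ^+ M.+2]exprS; ring.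
  have [_ | _] := eqVneq p.+1 q; last by rewrite /= !mulr0 !mul0r addr0.
  transitivity (c ^+ M * skew_term beta z mu la * (c * z * (c * (1 + beta * z)))).
    by rewrite mul_v_vinv_factors /=; ring.
  by rewrite [c ^+ M.+2]exprS [c ^+ M.+1]exprS; ring.
Qed.

Lemma Bel_G_skew M (m n : 'I_M -> nat) :
  (0 < M)%N -> (\sum_i m i)%N = (\sum_i n i).+1 ->
  c ^- (M - 1) * Bel beta v m n = G_skew (partition_of m) (partition_of n) z beta.
Proof.
move=> M_gt0 sum_mn; have [col0 _] := monodromy_col1 m n.
rewrite /skew_term !size_partition_of sum_mn eqxx -G_skew_weight ?z_neq0 // in col0.
have -> : Bel beta v m n = c ^+ (M - 1) * G_skew (partition_of m) (partition_of n) z beta.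
  apply: (mulfI c_neq0); rewrite mulrA -exprS subn1 prednK // -col0 /Bel.
  by congr (c * monodromy _ _ _ _ _ _); apply/val_inj.
by rewrite mulKf // expf_neq0 // c_neq0.
Qed.

End MonodromyEntries.

Theorem mainTheorem7 (C : numClosedFieldType) (beta : C) (M N : nat)
  (m n : 'I_M -> nat) (v : C) :
  (1 <= M)%N ->
  (\sum_(k < M) m k)%N = N.+1 ->
  (\sum_(k < M) n k)%N = N ->
  v != 0 -> v ^- 2 != beta ->
  let z := (v ^- 2 - beta)^-1 in
  (v^-1 - beta * v) ^- (M - 1) * Bel beta v m n
    = G_skew (partition_of m) (partition_of n) z beta /\
  (v^-1 - beta * v) ^- (M - 1) * Cel beta v n m
    = G_skew (dual_part M (partition_of m)) (dual_part M (partition_of n)) z beta.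
Proof.
move=> M_gt0 sum_m sum_n v_neq0 v2_neq_beta z; split.
  by apply: Bel_G_skew; rewrite ?sum_m ?sum_n.
rewrite Cel_Bel !dual_part_partition_of; apply: Bel_G_skew => //.
have sum_rev (k : 'I_M -> nat) : (\sum_i k (rev_ord i))%N = (\sum_i k i)%N.
  by rewrite [RHS](reindex_inj rev_ord_inj).
by rewrite !sum_rev sum_m sum_n.
Qed.
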